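(* Let $(\mathcal{X},\|\cdot\|)$ be a real Banach space, $P$ a probability distribution on a measurable space $\mathcal{E}$, and $Q,P_e:\mathcal{X}\to\mathcal{X}$ with $\|Q(\theta_1)-Q(\theta_2)\|\le\rho\|\theta_1-\theta_2\|$ ($\rho\in[0,1)$, $\theta^\star$ the unique fixed point of $Q$), $\|P_e(\theta_1)-P_e(\theta_2)\|\le L\|\theta_1-\theta_2\|$ for all $e$ ($L\ge0$), and $\mathbb{E}_{e\sim P}[\|P_e(\theta^\star)-\theta^\star\|]\le\sigma$ for some $\sigma\ge0$. Assume $\gamma:=\rho L>0$. Then for every $\theta\in\mathcal{X}$, \[\|\theta-\theta^\star\|\ge\frac{1}{2\rho L}\Big(\mathbb{E}_e[\Omega(\theta;e)]-(1+\rho)\sigma\Big)_+.\] If moreover $\pi:\mathcal{X}\to\mathcal{Z}$ and $\ell:\mathcal{Z}\to\mathbb{R}$ satisfy $\ell(\pi(\theta))-\ell(\pi(\theta^\star))\ge\frac{m_{\mathrm{QG}}}{2}\|\theta-\theta^\star\|^2$ for all $\theta$ with some $m_{\mathrm{QG}}>0$, then for every $\theta\in\mathcal{X}$, \[\ell(\pi(\theta))-\ell(\pi(\theta^\star))\ge\frac{m_{\mathrm{QG}}}{8\rho^2L^2}\Big(\mathbb{E}_e[\Omega(\theta;e)]-(1+\rho)\sigma\Big)_+^2.\]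
   Context: The order-gap is $\Omega(\theta;e):=\|Q(P_e(\theta))-P_e(Q(\theta))\|$, expectation over $e\sim P$; $(x)_+=\max(x,0)$. $\pi$ is a decision map into a set $\mathcal{Z}$ and $\ell$ a loss. *)

From HB Require Import structures.
From mathcomp Require Import all_boot all_order all_algebra.
From mathcomp Require Import all_classical all_reals all_analysis.
Set Implicit Arguments. Unset Strict Implicit. Unset Printing Implicit Defensive.
Import Order.TTheory GRing.Theory Num.Theory.
Import numFieldNormedType.Exports.
Local Open Scope ring_scope.

Definition order_gap (R : realType) (X : normedModType R) (E : Type)
  (Q : X -> X) (Pe : E -> X -> X) (theta : X) (e : E) : R :=
  `| Q (Pe e theta) - Pe e (Q theta) |.

Definition expected_gap (R : realType) (X : normedModType R)
  (d : measure_display) (T : measurableType d) (P : probability T R)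
  (Q : X -> X) (Pe : T -> X -> X) (theta : X) : R :=
  Rintegral P setT (order_gap Q Pe theta).

Definition pos_part (R : realType) (x : R) : R := Num.max x 0.

From HB Require Import structures.
From mathcomp Require Import all_boot all_order all_algebra.
From mathcomp Require Import all_classical all_reals all_analysis.
From mathcomp Require Import ring lra measurable_realfun.
Import Order.TTheory GRing.Theory Num.Theory.
Import numFieldNormedType.Exports.
Local Open Scope ring_scope.

(* Telescoping [Q (F t) - F (Q t)] through the fixed point [ts] of [Q] as
   [Q (F t) - Q (F ts)] + [Q (F ts) - ts] + [ts - F ts] + [F ts - F (Q t)]
   bounds the order gap of [F = P_e] pointwise by
   [2 rho L |t - ts| + (1 + rho) |F ts - ts|]: the outer pieces cost
   [rho L |t - ts|] each (for the last one rewrite [ts = Q ts]).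
   Integrating over [e] bounds the expected gap by
   [2 rho L |t - ts| + (1 + rho) sigma]; squaring gives the quadratic-growth
   version. *)

Section CommutationGap.
Variables (R : realFieldType) (X : normedModType R) (Q F : X -> X).
Variables (rho L : R) (ts : X).
Hypothesis rho_ge0 : 0 <= rho.
Hypothesis L_ge0 : 0 <= L.
Hypothesis Q_lipschitz : forall t1 t2, `|Q t1 - Q t2| <= rho * `|t1 - t2|.
Hypothesis F_lipschitz : forall t1 t2, `|F t1 - F t2| <= L * `|t1 - t2|.
Hypothesis Q_fixed : Q ts = ts.

Lemma commutation_gap_le (t : X) :
  `|Q (F t) - F (Q t)| <= 2 * rho * L * `|t - ts| + (1 + rho) * `|F ts - ts|.
Proof.
have -> : Q (F t) - F (Q t) =
    (Q (F t) - Q (F ts)) + (Q (F ts) - ts) + (ts - F ts) + (F ts - F (Q t)).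
  by rewrite !addrA !subrK.
have h1 : `|Q (F t) - Q (F ts)| <= rho * (L * `|t - ts|).
  exact: le_trans (Q_lipschitz _ _) (ler_wpM2l rho_ge0 (F_lipschitz _ _)).
have h2 : `|Q (F ts) - ts| <= rho * `|F ts - ts|.
  by have := Q_lipschitz (F ts) ts; rewrite Q_fixed.
have h3 : `|ts - F ts| = `|F ts - ts| by rewrite distrC.
have h4 : `|F ts - F (Q t)| <= L * (rho * `|t - ts|).
  apply: le_trans (F_lipschitz _ _) (ler_wpM2l L_ge0 _).
  by rewrite -{1}Q_fixed distrC.
have n1 := ler_normD (Q (F t) - Q (F ts) + (Q (F ts) - ts) + (ts - F ts))
  (F ts - F (Q t)).
have n2 := ler_normD (Q (F t) - Q (F ts) + (Q (F ts) - ts)) (ts - F ts).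
have n3 := ler_normD (Q (F t) - Q (F ts)) (Q (F ts) - ts).
lra.
Qed.

End CommutationGap.

Lemma Rintegral_le_affine (d : measure_display) (T : measurableType d)
    (R : realType) (P : probability T R) (f g : T -> R) (c k s : R) :
  0 <= c -> 0 <= k -> (forall x, 0 <= f x) -> (forall x, 0 <= g x) ->
  P.-integrable setT (fun x => (f x)%:E) -> measurable_fun setT g ->
  (\int[P]_(x in setT) (g x)%:E <= s%:E)%E ->
  (forall x, f x <= c + k * g x) ->
  Rintegral P setT f <= c + k * s.
Proof.
move=> c_ge0 k_ge0 f_ge0 g_ge0 f_int g_mes g_int f_le.
rewrite -lee_fin /Rintegral fineK; last exact: integrable_fin_num.
have gE_mes : measurable_fun setT (fun x => (g x)%:E : \bar R) by exact/measurable_EFinP.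
apply: (@le_trans _ _ (\int[P]_(x in setT) (c%:E + k%:E * (g x)%:E))%E).
  apply: ge0_le_integral => //.
  - by move=> x _; rewrite lee_fin.
  - exact: measurable_int f_int.
  - by apply: emeasurable_funD; [exact: measurable_cst | exact: measurable_funeM].
  - by move=> x _; rewrite -EFinM -EFinD lee_fin.
rewrite ge0_integralD //; last 2 first.
- by move=> x _; rewrite -EFinM lee_fin mulr_ge0.
- exact: measurable_funeM.
rewrite integral_cst //= probability_setT mule1 ge0_integralZl //; last first.
  by move=> x _; rewrite lee_fin.
by rewrite EFinD EFinM leeD2l // lee_wpmul2l // lee_fin.
Qed.

Theorem proposition4p14 (R : realType) (X : completeNormedModType R)
  (d : measure_display) (E : measurableType d) (P : probability E R)
  (Q : X -> X) (Pe : E -> X -> X) (rho L sigma : R) (theta_star : X)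
  (Z : Type) (pi : X -> Z) (ell : Z -> R) (mQG : R) :
  0 <= rho -> rho < 1 ->
  (forall t1 t2 : X, `|Q t1 - Q t2| <= rho * `|t1 - t2|) ->
  Q theta_star = theta_star ->
  0 <= L ->
  (forall (e : E) (t1 t2 : X), `|Pe e t1 - Pe e t2| <= L * `|t1 - t2|) ->
  0 <= sigma ->
  measurable_fun setT (fun e : E => `|Pe e theta_star - theta_star|) ->
  (\int[P]_(e in setT) (`|Pe e theta_star - theta_star|)%:E <= sigma%:E)%E ->
  (forall theta : X, P.-integrable setT (fun e => (order_gap Q Pe theta e)%:E)) ->
  0 < rho * L ->
  (forall theta : X,
     `|theta - theta_star| >=
       (2 * rho * L)^-1 *
         pos_part (expected_gap P Q Pe theta - (1 + rho) * sigma))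
  /\
  (0 < mQG ->
   (forall theta : X,
      ell (pi theta) - ell (pi theta_star) >= mQG / 2 * `|theta - theta_star| ^+ 2) ->
   forall theta : X,
     ell (pi theta) - ell (pi theta_star) >=
       mQG / (8 * rho ^+ 2 * L ^+ 2) *
         pos_part (expected_gap P Q Pe theta - (1 + rho) * sigma) ^+ 2).
Proof.
move=> rho_ge0 _ Q_lip Q_fixed L_ge0 Pe_lip _ dev_mes dev_int gap_int rhoL_gt0.
have rhoL2_gt0 : 0 < 2 * rho * L by rewrite -mulrA mulr_gt0.
set excess := fun theta =>
  pos_part (expected_gap P Q Pe theta - (1 + rho) * sigma).
have excess_ge0 theta : 0 <= excess theta by rewrite le_max lexx orbT.
have excess_le theta : excess theta <= 2 * rho * L * `|theta - theta_star|.
  rewrite ge_max pmulr_rge0 // normr_ge0 andbT lerBlDr.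
  apply: (@Rintegral_le_affine _ _ _ _ _ (fun e => `|Pe e theta_star - theta_star|))
    => //; first by rewrite pmulr_rge0.
  - by rewrite addr_ge0.
  - by move=> e; rewrite /order_gap.
  - by move=> e; apply: commutation_gap_le.
have dist_ge theta : (2 * rho * L)^-1 * excess theta <= `|theta - theta_star|.
  by rewrite ler_pdivrMl.
split=> // mQG_gt0 ell_growth theta.
apply: le_trans (ell_growth theta).
have -> : mQG / (8 * rho ^+ 2 * L ^+ 2) * excess theta ^+ 2 =
    mQG / 2 * ((2 * rho * L)^-1 * excess theta) ^+ 2.
  have /andP[rho_neq0 L_neq0] : (rho != 0) && (L != 0).
    by rewrite -negb_or -mulf_eq0 gt_eqF.
  by field; rewrite rho_neq0 L_neq0.
apply: ler_wpM2l; first by rewrite divr_ge0 ?ltW.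
apply: lerXn2r; last exact: dist_ge.
- by rewrite nnegrE mulr_ge0 // invr_ge0 ltW.
- by rewrite nnegrE.
Qed.
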